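(* Let $n\ge 2$, $\lambda=(\lambda_1,\dots,\lambda_n)\in\mathbb{R}^n$, and let $x$ be a vertex of the tweaked Gelfand–Tsetlin polytope $\widetilde{GT}(\lambda)$. Then every coordinate of $x$ lies in the additive subgroup $\Gamma(\lambda)=\mathbb{Z}\lambda_1+\dots+\mathbb{Z}\lambda_n\subseteq\mathbb{R}$.
   Context: Tweaked patterns: with $y_{1,j}:=\lambda_j$, a tweaked Gelfand–Tsetlin pattern of type $\lambda$ is a real vector with the $n^2-2$ coordinates $y_{i,j}$ ($2\le i\le n$, $i\le j\le n$), $z_{i,j}$ ($1\le i\le n-2$, $i\le j\le n-2$), $z^\uparrow_{i,n-1},z^\downarrow_{i,n-1}$ ($1\le i\le n-2$), $z_{n-1,n-1}$, satisfying: (T1) for $1\le i\le n-2$, $i\le j\le n-2$: $z_{i,j}\le y_{i,j}$, $z_{i,j}\ge y_{i,j+1}$, $z_{i,j}\ge y_{i+1,j+1}$, and $z_{i,j}\le y_{i+1,j}$ if $j\ge i+1$; (T2) for $1\le i\le n-2$: $\max\{y_{i,n},y_{i+1,n}\}\le z^\uparrow_{i,n-1}\le y_{i,n-1}$, $z^\uparrow_{i,n-1}\le y_{i,n-1}+y_{i,n}+y_{i+1,n}$, $\max\{y_{i,n},y_{i+1,n}\}\le z^\downarrow_{i,n-1}\le y_{i+1,n-1}$, $z^\downarrow_{i,n-1}\le y_{i+1,n-1}+y_{i,n}+y_{i+1,n}$, and $y_{i,n-1}-y_{i+1,n-1}=z^\uparrow_{i,n-1}-z^\downarrow_{i,n-1}$;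 (T3) $\max\{y_{n-1,n},y_{n,n}\}\le z_{n-1,n-1}\le y_{n-1,n-1}$ and $z_{n-1,n-1}\le y_{n-1,n-1}+y_{n-1,n}+y_{n,n}$. $\widetilde{GT}(\lambda)\subseteq\mathbb{R}^{n^2-2}$ is the set of all tweaked patterns of type $\lambda$ (a polyhedron; the claim concerns its vertices). *)

From HB Require Import structures.
From mathcomp Require Import all_boot all_order all_algebra.
Set Implicit Arguments. Unset Strict Implicit. Unset Printing Implicit Defensive.
Import Order.TTheory GRing.Theory Num.Theory.
Local Open Scope ring_scope.

(* Labels of the coordinates of a tweaked Gelfand-Tsetlin pattern
   (indices are 1-based, as in the paper). *)
Inductive gtlabel :=
  | LY of nat & nat
  | LZ of nat & nat
  | LZu of nat            (* z^up_{i,n-1}, 1 <= i <= n-2 *)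
  | LZd of nat            (* z^down_{i,n-1}, 1 <= i <= n-2 *)
  | LZn.                  (* z_{n-1,n-1} *)

Definition gt_valid (n : nat) (l : gtlabel) : bool :=
  match l with
  | LY i j => [&& 2 <= i, i <= j & j <= n]%N
  | LZ i j => [&& 1 <= i, i <= j & j <= n - 2]%N
  | LZu i | LZd i => (1 <= i <= n - 2)%N
  | LZn => true
  end.

(* The n^2 - 2 coordinates. A point of R^{n^2-2} is a function gtcoord n -> R. *)
Definition gtcoord (n : nat) := {l : gtlabel | gt_valid n l}.

Section Pattern.
Variables (R : realFieldType) (n : nat) (lam : 'I_n -> R) (x : gtcoord n -> R).

(* value of coordinate l (0 for invalid labels, never used) *)
Definition gget (l : gtlabel) : R := odflt 0 (omap x (insub l : option (gtcoord n))).

(* lambda_j, 1-based *)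
Definition lamj (j : nat) : R := odflt 0 (omap lam (insub j.-1 : option 'I_n)).

Definition Y (i j : nat) : R := if i == 1%N then lamj j else gget (LY i j).
Definition Z (i j : nat) : R := gget (LZ i j).
Definition Zu (i : nat) : R := gget (LZu i).
Definition Zd (i : nat) : R := gget (LZd i).
Definition Zn : R := gget LZn.

Definition tweaked_GT_pattern : Prop :=
  (forall i j : nat, (1 <= i <= n - 2)%N -> (i <= j <= n - 2)%N ->
     [/\ Z i j <= Y i j, Z i j >= Y i j.+1, Z i j >= Y i.+1 j.+1
       & (i.+1 <= j)%N -> Z i j <= Y i.+1 j]) /\
  (forall i : nat, (1 <= i <= n - 2)%N ->
     [/\ Num.max (Y i n) (Y i.+1 n) <= Zu i, Zu i <= Y i n.-1
       & Zu i <= Y i n.-1 + Y i n + Y i.+1 n] /\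
     [/\ Num.max (Y i n) (Y i.+1 n) <= Zd i, Zd i <= Y i.+1 n.-1
       & Zd i <= Y i.+1 n.-1 + Y i n + Y i.+1 n] /\
     Y i n.-1 - Y i.+1 n.-1 = Zu i - Zd i) /\
  [/\ Num.max (Y n.-1 n) (Y n n) <= Zn, Zn <= Y n.-1 n.-1
    & Zn <= Y n.-1 n.-1 + Y n.-1 n + Y n n].

End Pattern.

Definition tweakedGT (R : realFieldType) (n : nat) (lam : 'I_n -> R)
  : (gtcoord n -> R) -> Prop := fun x => tweaked_GT_pattern lam x.

Definition is_vertex (R : realFieldType) (T : Type) (P : (T -> R) -> Prop)
  (x : T -> R) : Prop :=
  P x /\ forall (u v : T -> R) (t : R), P u -> P v -> 0 < t < 1 ->
    (forall c, x c = t * u c + (1 - t) * v c) -> forall c, u c = v c.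

Definition Gamma (R : realFieldType) (n : nat) (lam : 'I_n -> R) (r : R) : Prop :=
  exists k : 'I_n -> int, r = \sum_(i < n) lam i *~ k i.

From HB Require Import structures.
From mathcomp Require Import all_boot all_order all_algebra.
From mathcomp Require Import reals.
From mathcomp Require Import ring lra zify.
From Stdlib Require Import Classical.
Set Implicit Arguments. Unset Strict Implicit. Unset Printing Implicit Defensive.
Import Order.TTheory GRing.Theory Num.Theory.
Local Open Scope ring_scope.

(* Suppose some coordinate of a vertex x avoids Gamma, and pick a real t not in
   Gamma.  We build a direction d that moves every y- and z_{i,j}-coordinate
   equal to t (resp. -t) at unit speed +1 (resp. -1), keeps the others fixed,
   and moves z^up, z^down and z_{n-1,n-1} at speeds chosen so that every
   constraint which is tight at x stays tight.  Every constraint a <= b with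
   a = b then has equal speeds on both sides, and every strict one survives a
   small move, so x + e d and x - e d are tweaked patterns for small e > 0;
   since x is a vertex, d = 0.  Finally, if some coordinate avoids Gamma, one
   of these directions (for a suitable t) is nonzero: this contradiction proves
   the theorem. *)

Section NearZero.
Variable R : realFieldType.

Definition near0 (P : R -> Prop) : Prop :=
  exists2 eps : R, 0 < eps & forall e, `|e| <= eps -> P e.

Lemma near0_mono (P Q : R -> Prop) :
  (forall e, P e -> Q e) -> near0 P -> near0 Q.
Proof. by move=> PQ [eps eps_gt0 HP]; exists eps => // e /HP /PQ. Qed.

Lemma near0_all (P : R -> Prop) : (forall e, P e) -> near0 P.
Proof. by move=> HP; exists 1 => // e _; apply: HP. Qed.

Lemma near0_and (P Q : R -> Prop) :
  near0 P -> near0 Q -> near0 (fun e => P e /\ Q e).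
Proof.
move=> [e1 e1_gt0 HP] [e2 e2_gt0 HQ].
exists (Num.min e1 e2); first by rewrite lt_min e1_gt0 e2_gt0.
by move=> e; rewrite le_min => /andP[h1 h2]; split; [apply: HP | apply: HQ].
Qed.

Lemma near0_forall_ltn (N : nat) (P : nat -> R -> Prop) :
  (forall k, (k < N)%N -> near0 (P k)) ->
  near0 (fun e => forall k, (k < N)%N -> P k e).
Proof.
elim: N => [|N IHN] HP; first exact: near0_all.
have Hlt : near0 (fun e => forall k, (k < N)%N -> P k e).
  by apply: IHN => k /ltnW; apply: HP.
apply: near0_mono (near0_and Hlt (HP N (ltnSn N))) => e [Hlt_e HN] k.
by rewrite ltnS leq_eqVlt => /orP[/eqP -> // | /Hlt_e].
Qed.

Lemma near0_forall_bounded (N : nat) (A : pred nat) (P : nat -> R -> Prop) :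
  (forall k, A k -> (k < N)%N) -> (forall k, A k -> near0 (P k)) ->
  near0 (fun e => forall k, A k -> P k e).
Proof.
move=> bound HP.
have H : near0 (fun e => forall k, (k < N)%N -> A k -> P k e).
  apply: near0_forall_ltn => k _; have [Ak|_] := boolP (A k).
    by apply: near0_mono (HP k Ak) => e Pke _.
  exact: near0_all.
by apply: near0_mono H => e H k Ak; apply: H (bound k Ak) Ak.
Qed.

Lemma near0_perturb_le (a b da db : R) :
  a <= b -> (a = b -> da = db) -> near0 (fun e => a + e * da <= b + e * db).
Proof.
move=> le_ab tight; have [eq_ab|ne_ab] := eqVneq a b.
  by apply: near0_all => e; rewrite -(tight eq_ab) eq_ab.
have gap : 0 < b - a by rewrite subr_gt0 lt_neqAle ne_ab le_ab.
have m_gt0 : 0 < `|da - db| + 1 by apply: ltr_pwDr.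
exists ((b - a) / (`|da - db| + 1)) => [|e le_e]; first exact: divr_gt0.
have small_move : e * (da - db) <= b - a.
  apply: le_trans (ler_norm _) _; rewrite normrM.
  apply: le_trans (ler_wpM2r (normr_ge0 _) le_e) _.
  by rewrite mulrAC ler_pdivrMr // ler_wpM2l ?subr_ge0 // lerDl.
by rewrite mulrBr in small_move; lra.
Qed.

Lemma vertex_rigid (T : Type) (P : (T -> R) -> Prop) (x d : T -> R) :
  is_vertex P x -> near0 (fun e => P (fun c => x c + e * d c)) ->
  forall c, d c = 0.
Proof.
move=> [_ extreme] [eps eps_gt0 HP] c.
have le_eps : `|eps| <= eps by rewrite ger0_norm // ltW.
have le_eps' : `|- eps| <= eps by rewrite normrN.
have Pu := HP eps le_eps; have Pv := HP (- eps) le_eps'.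
have half : 0 < (2 : R)^-1 < 1 by rewrite invr_gt0 ltr0n invf_lt1 ?ltr0n ?ltr1n.
have mid c' : x c' = 2^-1 * (x c' + eps * d c') + (1 - 2^-1) * (x c' + - eps * d c').
  by field.
have := extreme _ _ _ Pu Pv half mid c; rewrite mulNr => same.
have /eqP : eps * d c = 0 by lra.
by rewrite mulf_eq0 (gt_eqF eps_gt0) => /eqP.
Qed.

End NearZero.

(* One block of constraints of type (T2): z^up between max(c, c') and
   min(Y, Y + c + c'), z^down likewise with Y', coupled by Y - Y' = zu - zd.
   (T3) is the upper half of such a block with Y = Y' and zu = zd. *)
Definition upper_ok (R : realFieldType) (Y c c' z : R) : Prop :=
  [/\ Num.max c c' <= z, z <= Y & z <= Y + c + c'].

Definition block_ok (R : realFieldType) (Y Y' c c' zu zd : R) : Prop :=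
  upper_ok Y c c' zu /\ upper_ok Y' c c' zd /\ Y - Y' = zu - zd.

(* Moving Y, Y', c, c' at speeds s(.) given by an odd function s, we choose
   speeds for zu and zd that keep every tight constraint of the block tight. *)
Section BlockSpeeds.
Variables (R : realFieldType) (s : R -> R).
Hypothesis sN : forall v, s (- v) = - s v.

Lemma s_opp_sum a b : a + b = 0 -> s a + s b = 0.
Proof. by move=> ab0; rewrite (_ : b = - a) ?sN ?addrN //; lra. Qed.

(* speed of zu: follow whichever constraint is tight (if any) *)
Definition dup (Y Y' c c' zu zd : R) : R :=
  if [|| zu == Y, zu == c | zu == c'] then s zu
  else if (zd == c) || (zd == c') then s zd + s Y - s Y'
  else if zu == Y + c + c' then s Y + s c + s c'
  else s zu.

(* speed of zd, forced by the coupling equation *)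
Definition ddown (Y Y' c c' zu zd : R) : R := dup Y Y' c c' zu zd - s Y + s Y'.

Lemma dup_tight (Y Y' c c' zu zd : R) : Y - Y' = zu - zd ->
  let du := dup Y Y' c c' zu zd in
  [/\ c = zu -> s c = du, c' = zu -> s c' = du, zu = Y -> du = s Y
    & zu = Y + c + c' -> du = s Y + s c + s c'].
Proof.
move=> E du; rewrite /du /dup; split=> [<-|<-|->|tight].
- by rewrite eqxx !orbT.
- by rewrite eqxx !orbT.
- by rewrite eqxx.
case: ifP => [/or3P[]/eqP eq_zu|_].
- by have := @s_opp_sum c c'; rewrite -eq_zu; lra.
- by have := @s_opp_sum Y c'; rewrite -eq_zu; lra.
- by have := @s_opp_sum Y c; rewrite -eq_zu; lra.
case: ifP => [/orP[]/eqP eq_zd|_]; last by rewrite tight eqxx.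
- by have := @s_opp_sum Y' c'; rewrite -eq_zd; lra.
- by have := @s_opp_sum Y' c; rewrite -eq_zd; lra.
Qed.

(* Same for the lower half of a feasible block; feasibility rules out the
   configuration zu = c', zd = c with c != c'. *)
Lemma ddown_tight (Y Y' c c' zu zd : R) : block_ok Y Y' c c' zu zd ->
  let dd := ddown Y Y' c c' zu zd in
  [/\ c = zd -> s c = dd, c' = zd -> s c' = dd, zd = Y' -> dd = s Y'
    & zd = Y' + c + c' -> dd = s Y' + s c + s c'].
Proof.
move=> [[up_zu _ _] [[up_zd _ _] E]] dd; rewrite /dd /ddown.
move: up_zu up_zd; rewrite !ge_max => /andP[c_zu c'_zu] /andP[c_zd c'_zd].
have [_ _ tY tsum] := dup_tight c c' E.
split=> [eq_c|eq_c'|eq_Y'|eq_sum].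
- rewrite /dup; case: ifP => [/or3P[]/eqP eq_zu|_].
  + by rewrite eq_zu (_ : c = Y'); [ring | lra].
  + by rewrite eq_zu (_ : Y' = Y); [ring | lra].
  + have [eq_cc' eq_YY'] : c' = c /\ Y' = Y by split; lra.
    by rewrite eq_zu eq_cc' eq_YY'; ring.
  by rewrite -eq_c eqxx /=; ring.
- rewrite /dup; case: ifP => [/or3P[]/eqP eq_zu|_].
  + by rewrite eq_zu (_ : c' = Y'); [ring | lra].
  + have [eq_cc' eq_YY'] : c' = c /\ Y' = Y by split; lra.
    by rewrite eq_zu eq_cc' eq_YY'; ring.
  + by rewrite eq_zu (_ : Y' = Y); [ring | lra].
  by rewrite -eq_c' eqxx orbT /=; ring.
- by rewrite tY; [ring | lra].
- by rewrite tsum; [ring | lra].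
Qed.

Lemma block_perturb (Y Y' c c' zu zd : R) : block_ok Y Y' c c' zu zd ->
  near0 (fun e => block_ok (Y + e * s Y) (Y' + e * s Y') (c + e * s c)
    (c' + e * s c') (zu + e * dup Y Y' c c' zu zd) (zd + e * ddown Y Y' c c' zu zd)).
Proof.
move=> feasible; have [[u1 u2 u3] [[d1 d2 d3] E]] := feasible.
move: u1 d1; rewrite !ge_max => /andP[u1 u1'] /andP[d1 d1'].
have [tu1 tu1' tu2 tu3] := dup_tight c c' E.
have [td1 td1' td2 td3] := ddown_tight feasible.
have H := near0_and (near0_perturb_le u1 tu1) (near0_and (near0_perturb_le u1' tu1')
  (near0_and (near0_perturb_le u2 tu2) (near0_and (near0_perturb_le u3 tu3)
  (near0_and (near0_perturb_le d1 td1) (near0_and (near0_perturb_le d1' td1')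
  (near0_and (near0_perturb_le d2 td2) (near0_perturb_le d3 td3))))))).
apply: near0_mono H => e [g1 [g1' [g2 [g3 [h1 [h1' [h2 h3]]]]]]].
have sum_speed (V : R) : (V + e * s V) + (c + e * s c) + (c' + e * s c') =
  (V + c + c') + e * (s V + s c + s c') by ring.
have shift (a b da db : R) : (a + e * da) - (b + e * db) = (a - b) + e * (da - db).
  by ring.
rewrite /block_ok /upper_ok !ge_max !sum_speed g1 g1' g2 g3 h1 h1' h2 h3.
by do 2!split=> //; rewrite !shift E /ddown; congr (_ + e * _); ring.
Qed.

End BlockSpeeds.

Section GammaGroup.
Variables (R : realFieldType) (n : nat) (lam : 'I_n -> R).

Lemma Gamma0 : Gamma lam 0.
Proof. by exists (fun=> 0); rewrite big1 // => i _; rewrite mulr0z. Qed.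

Lemma GammaD a b : Gamma lam a -> Gamma lam b -> Gamma lam (a + b).
Proof.
move=> [ka ->] [kb ->]; exists (fun i => ka i + kb i).
by rewrite -big_split; apply: eq_bigr => i _; rewrite mulrzDr.
Qed.

Lemma GammaN a : Gamma lam a -> Gamma lam (- a).
Proof.
move=> [k ->]; exists (fun i => - k i).
by rewrite -sumrN; apply: eq_bigr => i _; rewrite mulrNz.
Qed.

Lemma GammaB a b : Gamma lam a -> Gamma lam b -> Gamma lam (a - b).
Proof. by move=> Ga Gb; apply: GammaD => //; apply: GammaN. Qed.

Lemma Gamma_lamj j : Gamma lam (lamj lam j).
Proof.
rewrite /lamj; case: insubP => [i _ _|_] /=; last exact: Gamma0.
exists (fun k => (k == i)%:Z); rewrite (bigD1 i) //= eqxx mulr1z big1 ?addr0 //.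
by move=> k /negbTE ->; rewrite mulr0z.
Qed.

End GammaGroup.

Definition tsign (R : realFieldType) (t v : R) : R :=
  if v == t then 1 else if v == - t then -1 else 0.

Lemma tsignN (R : realFieldType) (t : R) : t != 0 ->
  forall v, tsign t (- v) = - tsign t v.
Proof.
move=> t_neq0 v; have t_neq_opp : t != - t by apply: contraNneq t_neq0 => ?; lra.
rewrite /tsign; have [->|v_neq_t] := eqVneq v t.
  by rewrite [- t == t]eq_sym (negbTE t_neq_opp) !eqxx.
have [->|v_neq_opp] := eqVneq v (- t); first by rewrite !opprK !eqxx.
rewrite (_ : (- v == t) = false); last by apply/eqP=> ?; move/eqP: v_neq_opp; lra.
rewrite (_ : (- v == - t) = false) ?oppr0 //.
by apply/eqP=> ?; move/eqP: v_neq_t; lra.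
Qed.

Lemma gget_lin (R : realFieldType) (n : nat) (x d : gtcoord n -> R) (e : R) l :
  gget (fun c => x c + e * d c) l = gget x l + e * gget d l.
Proof. by rewrite /gget; case: insubP => [u _ _|_] /=; rewrite ?mulr0 ?addr0. Qed.

Definition plain_label (l : gtlabel) : bool :=
  match l with LY _ _ | LZ _ _ => true | _ => false end.

Definition T1_row (R : realFieldType) (n : nat) (lam : 'I_n -> R)
    (x : gtcoord n -> R) (i j : nat) : Prop :=
  [/\ Z x i j <= Y lam x i j, Z x i j >= Y lam x i j.+1,
      Z x i j >= Y lam x i.+1 j.+1
    & (i.+1 <= j)%N -> Z x i j <= Y lam x i.+1 j].

Definition GT_T1 (R : realFieldType) (n : nat) (lam : 'I_n -> R)
    (x : gtcoord n -> R) : Prop :=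
  forall i j : nat, (1 <= i <= n - 2)%N -> (i <= j <= n - 2)%N -> T1_row lam x i j.

Definition GT_T2 (R : realFieldType) (n : nat) (lam : 'I_n -> R)
    (x : gtcoord n -> R) : Prop :=
  forall i : nat, (1 <= i <= n - 2)%N ->
    block_ok (Y lam x i n.-1) (Y lam x i.+1 n.-1) (Y lam x i n) (Y lam x i.+1 n)
      (Zu x i) (Zd x i).

Definition GT_T3 (R : realFieldType) (n : nat) (lam : 'I_n -> R)
    (x : gtcoord n -> R) : Prop :=
  upper_ok (Y lam x n.-1 n.-1) (Y lam x n.-1 n) (Y lam x n n) (Zn x).

Section Perturbation.
Variables (R : realFieldType) (n : nat) (lam : 'I_n -> R) (x : gtcoord n -> R).
Variable t : R.
Hypothesis t_notin : ~ Gamma lam t.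

Lemma t_neq0 : t != 0.
Proof. by apply: contra_notN t_notin => /eqP ->; apply: Gamma0. Qed.

Lemma tsign_Gamma v : Gamma lam v -> tsign t v = 0.
Proof.
move=> Gv; rewrite /tsign; have [eq_vt|_] := eqVneq v t.
  by case: t_notin; rewrite -eq_vt.
have [eq_v|//] := eqVneq v (- t); case: t_notin.
by rewrite -(opprK t) -eq_v; apply: GammaN.
Qed.

Let s := tsign t.
Let sN := tsignN t_neq0.

Definition dir_up (i : nat) : R := dup s (Y lam x i n.-1) (Y lam x i.+1 n.-1)
  (Y lam x i n) (Y lam x i.+1 n) (Zu x i) (Zd x i).
Definition dir_down (i : nat) : R := ddown s (Y lam x i n.-1) (Y lam x i.+1 n.-1)
  (Y lam x i n) (Y lam x i.+1 n) (Zu x i) (Zd x i).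
Definition dir_last : R := dup s (Y lam x n.-1 n.-1) (Y lam x n.-1 n.-1)
  (Y lam x n.-1 n) (Y lam x n n) (Zn x) (Zn x).

Definition dir (c : gtcoord n) : R :=
  match val c with
  | LY _ _ | LZ _ _ => s (x c)
  | LZu i => dir_up i
  | LZd i => dir_down i
  | LZn => dir_last
  end.

Definition moved (e : R) : gtcoord n -> R := fun c => x c + e * dir c.

Lemma gget_dir_plain l : plain_label l -> gget dir l = s (gget x l).
Proof.
move=> plain; rewrite /gget; case: insubP => [u _ val_u|_] /=.
  by rewrite /dir val_u; move: plain; case: l val_u.
by rewrite /s tsign_Gamma //; apply: Gamma0.
Qed.

Lemma gget_dir l (valid : gt_valid n l) : gget dir l = dir (exist _ l valid).
Proof. by rewrite /gget insubT. Qed.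

Lemma Y_moved e i j : Y lam (moved e) i j = Y lam x i j + e * s (Y lam x i j).
Proof.
rewrite /Y; case: ifP => _; last by rewrite /moved gget_lin gget_dir_plain.
by rewrite /s tsign_Gamma ?mulr0 ?addr0 //; apply: Gamma_lamj.
Qed.

Lemma Z_moved e i j : Z (moved e) i j = Z x i j + e * s (Z x i j).
Proof. by rewrite /Z /moved gget_lin gget_dir_plain. Qed.

Lemma Zu_moved e i : gt_valid n (LZu i) -> Zu (moved e) i = Zu x i + e * dir_up i.
Proof. by move=> valid; rewrite /Zu /moved gget_lin (gget_dir valid). Qed.

Lemma Zd_moved e i : gt_valid n (LZd i) -> Zd (moved e) i = Zd x i + e * dir_down i.
Proof. by move=> valid; rewrite /Zd /moved gget_lin (gget_dir valid). Qed.

Lemma Zn_moved e : Zn (moved e) = Zn x + e * dir_last.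
Proof. by rewrite /Zn /moved gget_lin (@gget_dir LZn isT). Qed.

(* For plain coordinates equal values have equal speeds. *)
Lemma near0_plain_le a b : a <= b -> near0 (fun e => a + e * s a <= b + e * s b).
Proof. by move=> le_ab; apply: near0_perturb_le le_ab _ => ->. Qed.

Lemma T1_row_moved i j : T1_row lam x i j -> near0 (fun e => T1_row lam (moved e) i j).
Proof.
move=> [a1 a2 a3 a4].
have a4_near : near0 (fun e => (i.+1 <= j)%N ->
    Z x i j + e * s (Z x i j) <= Y lam x i.+1 j + e * s (Y lam x i.+1 j)).
  have [/a4/near0_plain_le near_ij|_] := boolP (i.+1 <= j)%N.
    by apply: near0_mono near_ij => e h _.
  exact: near0_all.
apply: near0_mono (near0_and (near0_plain_le a1) (near0_and (near0_plain_le a2)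
  (near0_and (near0_plain_le a3) a4_near))) => e [g1 [g2 [g3 g4]]].
by rewrite /T1_row !Y_moved !Z_moved.
Qed.

Lemma T1_moved : GT_T1 lam x -> near0 (fun e => GT_T1 lam (moved e)).
Proof.
move=> T1.
have rows : near0 (fun e => forall i, (1 <= i <= n - 2)%N ->
    forall j, (i <= j <= n - 2)%N -> T1_row lam (moved e) i j).
  apply: (near0_forall_bounded (N := n)) => [i /andP[] | i hi]; first lia.
  apply: (near0_forall_bounded (N := n)) => [j /andP[] | j hj]; first lia.
  exact: T1_row_moved (T1 i j hi hj).
by apply: near0_mono rows => e rows_e i j hi hj; apply: rows_e.
Qed.

Lemma T2_moved : GT_T2 lam x -> near0 (fun e => GT_T2 lam (moved e)).
Proof.
move=> T2; apply: (near0_forall_bounded (N := n)) => [i /andP[] | i hi]; first lia.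
apply: near0_mono (block_perturb sN (T2 i hi)) => e block_e.
by rewrite !Y_moved (Zu_moved _ hi) (Zd_moved _ hi).
Qed.

Lemma T3_moved : GT_T3 lam x -> near0 (fun e => GT_T3 lam (moved e)).
Proof.
move=> T3; have diag : Y lam x n.-1 n.-1 - Y lam x n.-1 n.-1 = Zn x - Zn x.
  by rewrite !subrr.
apply: near0_mono (block_perturb sN (conj T3 (conj T3 diag))) => e [upper_e _].
by rewrite /GT_T3 !Y_moved Zn_moved.
Qed.

Lemma moved_feasible : tweakedGT lam x -> near0 (fun e => tweakedGT lam (moved e)).
Proof.
move=> [T1 [T2 T3]].
apply: near0_mono (near0_and (T1_moved T1) (near0_and (T2_moved T2) (T3_moved T3))).
by move=> e [T1e [T2e T3e]]; split; last split.
Qed.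

Lemma dir_vanishes : is_vertex (tweakedGT lam) x -> forall c, dir c = 0.
Proof. by move=> vx; apply: vertex_rigid vx (moved_feasible vx.1). Qed.

End Perturbation.

Lemma dup_tsign_one (R : realFieldType) (n : nat) (lam : 'I_n -> R)
    (Y Y' c c' zu zd : R) :
  Gamma lam Y -> Gamma lam Y' -> Gamma lam c -> Gamma lam c' -> ~ Gamma lam zu ->
  Y - Y' = zu - zd -> dup (tsign zu) Y Y' c c' zu zd = 1.
Proof.
move=> GY GY' Gc Gc' zu_notin E; rewrite /dup.
case: ifP => [/or3P[]/eqP eq_zu|_]; try by case: zu_notin; rewrite eq_zu.
case: ifP => [/orP[]/eqP eq_zd|_].
- case: zu_notin; have -> : zu = c + (Y - Y') by lra.
  by apply: GammaD => //; apply: GammaB.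
- case: zu_notin; have -> : zu = c' + (Y - Y') by lra.
  by apply: GammaD => //; apply: GammaB.
case: ifP => [/eqP eq_zu|_]; last by rewrite /tsign eqxx.
by case: zu_notin; rewrite eq_zu; apply: GammaD => //; apply: GammaD.
Qed.

Lemma gget_val (R : realFieldType) (n : nat) (x : gtcoord n -> R) (c : gtcoord n) :
  gget x (val c) = x c.
Proof. by rewrite /gget valK. Qed.

Lemma Y_in_Gamma (R : realFieldType) (n : nat) (lam : 'I_n -> R)
    (x : gtcoord n -> R) :
  (forall c, plain_label (val c) -> Gamma lam (x c)) ->
  forall i j, Gamma lam (Y lam x i j).
Proof.
move=> plainG i j; rewrite /Y; case: ifP => _; first exact: Gamma_lamj.
rewrite /gget; case: insubP => [u _ val_u|_] /=; last exact: Gamma0.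
by apply: plainG; rewrite val_u.
Qed.

Lemma nonzero_direction (R : realFieldType) (n : nat) (lam : 'I_n -> R)
    (x : gtcoord n -> R) (c0 : gtcoord n) :
  tweakedGT lam x -> ~ Gamma lam (x c0) ->
  exists t c, ~ Gamma lam t /\ dir lam x t c != 0.
Proof.
move=> [_ [T2 _]] c0_notin.
have [[c [plain c_notin]] | no_plain] :=
  classic (exists c, plain_label (val c) /\ ~ Gamma lam (x c)).
  exists (x c), c; split=> //; rewrite /dir; move: plain.
  by case: (val c) => //= *; rewrite /tsign eqxx oner_neq0.
have plainG c : plain_label (val c) -> Gamma lam (x c).
  by move=> plain; apply: NNPP => c_notin; apply: no_plain; exists c.
have GY := Y_in_Gamma plainG.
have x0 := gget_val x c0; move: (valP c0) x0.
case E: (val c0) => [i j|i j|i|i|] valid x0; try by case: c0_notin; apply: plainG; rewrite E.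
- have [_ [_ Ei]] := T2 i valid.
  have zu_notin : ~ Gamma lam (Zu x i) by rewrite /Zu x0.
  exists (Zu x i), c0; split=> //.
  by rewrite /dir E /dir_up (dup_tsign_one _ _ _ _ zu_notin Ei) ?oner_neq0.
- have [_ [_ Ei]] := T2 i valid.
  have zu_notin : ~ Gamma lam (Zu x i).
    move=> zu_in; apply: c0_notin; rewrite -x0 -/(Zd x i).
    have -> : Zd x i = Zu x i - (Y lam x i n.-1 - Y lam x i.+1 n.-1) by lra.
    by apply: GammaB => //; apply: GammaB.
  exists (Zu x i), (exist _ (LZu i) valid); split=> //.
  by rewrite /dir /= /dir_up (dup_tsign_one _ _ _ _ zu_notin Ei) ?oner_neq0.
- have diag : Y lam x n.-1 n.-1 - Y lam x n.-1 n.-1 = Zn x - Zn x by rewrite !subrr.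
  have zn_notin : ~ Gamma lam (Zn x) by rewrite /Zn x0.
  exists (Zn x), c0; split=> //.
  by rewrite /dir E /dir_last (dup_tsign_one _ _ _ _ zn_notin diag) ?oner_neq0.
Qed.

Theorem theorem7p8 (R : realType) (n : nat) (lam : 'I_n -> R)
  (x : gtcoord n -> R) :
  (2 <= n)%N -> is_vertex (tweakedGT lam) x ->
  forall c : gtcoord n, Gamma lam (x c).
Proof.
move=> _ vx c; apply: NNPP => c_notin.
have [t [c' [t_notin dir_neq0]]] := nonzero_direction vx.1 c_notin.
by move/eqP: dir_neq0; apply; apply: dir_vanishes.
Qed.
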